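(* Let $n\ge2$ and $\rho=1-\frac1n$, and consider $x_k - C_n^1\rho\, x_{k-1} + \dots + (-1)^n\rho^n x_{k-n}=0$ (characteristic polynomial $(\lambda-\rho)^n$) with $x^{(0)}=(0,\dots,0,1)$. Then $x_k=C_k^{n-1}\rho^{k-n+1}$, the maximum of $x_k$ over $k\ge n-1$ is attained at $k=n^2-n-1$ (and also at $k=n^2-n$), and $$\max_{k\ge n-1}x_k=C_{n^2-n-1}^{\,n^2-2n}\left(1-\tfrac1n\right)^{n^2-2n}.$$
   Context: $C_p^q=\frac{p!}{q!(p-q)!}$. *)

From HB Require Import structures.
From mathcomp Require Import all_boot all_order all_algebra.
Set Implicit Arguments. Unset Strict Implicit. Unset Printing Implicit Defensive.
Import Order.TTheory GRing.Theory Num.Theory.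
Local Open Scope ring_scope.

Definition rho (R : realFieldType) (n : nat) : R := 1 - (n%:R)^-1.

Definition satisfies_rec (R : realFieldType) (n : nat) (x : nat -> R) : Prop :=
  forall k : nat, (n <= k)%N ->
    \sum_(j < n.+1) (-1) ^+ j * ('C(n, j))%:R * (rho R n) ^+ j * x (k - j)%N = 0.

(* Initial vector x^(0) = (x_0, ..., x_{n-1}) = (0, ..., 0, 1). *)
Definition initial_cond (R : realFieldType) (n : nat) (x : nat -> R) : Prop :=
  (forall i : nat, (i < n.-1)%N -> x i = 0) /\ x n.-1 = 1.

From HB Require Import structures.
From mathcomp Require Import all_boot all_order all_algebra.
From mathcomp Require Import zify ring.
Set Implicit Arguments. Unset Strict Implicit. Unset Printing Implicit Defensive.
Import Order.TTheory GRing.Theory Num.Theory.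
Local Open Scope ring_scope.

(* The operator of the recurrence is (1 - rho B)^n with B the backward shift.
   It kills k |-> C(k, m) rho^(k - m) for m < n, since (1 - B)^n kills every
   polynomial of degree < n; uniqueness of solutions with given initial values
   then yields the closed form.  Writing m = n - 1, consecutive terms satisfy
   (x_(k+1) - x_k) (k + 1 - m) n = x_k (m n - 1 - k), so x increases up to
   k = m n - 1 = n^2 - n - 1, takes the same value at the next index, and
   decreases afterwards. *)

Definition bdiffn {R : pzRingType} (n : nat) (f : nat -> R) (k : nat) : R :=
  \sum_(j < n.+1) (-1) ^+ j * ('C(n, j))%:R * f (k - j)%N.

Section BackwardDifference.
Variable R : comNzRingType.

Lemma bdiffnS n (f : nat -> R) k :
  bdiffn n.+1 f k = bdiffn n f k - bdiffn n f k.-1.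
Proof.
rewrite /bdiffn big_ord_recl [in RHS]big_ord_recl /=.
pose B i := (-1 : R) ^+ i * ('C(n, i.+1))%:R * f (k - i.+1)%N.
pose A i := (-1 : R) ^+ i * ('C(n, i))%:R * f (k.-1 - i)%N.
rewrite (eq_bigr (fun i : 'I_n.+1 => - A i - B i)); last first.
  move=> i _; rewrite /A /B /bump /= add1n binS natrD exprS.
  by rewrite (_ : (k - i.+1 = k.-1 - i)%N); [ring | lia].
rewrite [\sum_(i < n) _](eq_bigr (fun i : 'I_n => - B i)); last first.
  by move=> i _; rewrite /B /bump /= add1n exprS; ring.
rewrite sumrB [X in _ + (_ - X)]big_ord_recr /= {2}/B (bin_small (ltnSn n)).
by rewrite !(mul0r, mulr0) addr0 !sumrN !subn0 !bin0 /A; ring.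
Qed.

Lemma bdiffn_binS n m k : (n < k)%N ->
  bdiffn n (fun i => ('C(i, m.+1))%:R) k - bdiffn n (fun i => ('C(i, m.+1))%:R) k.-1
  = bdiffn n (fun i => ('C(i, m))%:R : R) k.-1.
Proof.
move=> lt_nk; rewrite /bdiffn -sumrB; apply: eq_bigr => j _.
rewrite (_ : (k - j = (k.-1 - j).+1)%N); last by have := ltn_ord j; lia.
by rewrite binS natrD; ring.
Qed.

Lemma bdiffn_bin_eq0 n m k : (m < n <= k)%N ->
  bdiffn n (fun i => ('C(i, m))%:R : R) k = 0.
Proof.
elim: n m k => [|n IHn] m k /andP[lt_mn le_nk] //; rewrite bdiffnS.
case: m lt_mn => [|m] lt_mn.
  by apply/eqP; rewrite subr_eq0; apply/eqP/eq_bigr => j _; rewrite !bin0.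
by rewrite bdiffn_binS ?IHn //; lia.
Qed.

End BackwardDifference.

Section LinearRecurrence.
Variables (R : pzRingType) (n : nat) (a : nat -> R).
Hypothesis a0 : a 0%N = 1.

Definition solves_rec (x : nat -> R) : Prop :=
  forall k, (n <= k)%N -> \sum_(j < n.+1) a j * x (k - j)%N = 0.

Lemma solves_rec_eq (x y : nat -> R) : solves_rec x -> solves_rec y ->
  (forall k, (k < n)%N -> x k = y k) -> x =1 y.
Proof.
move=> rec_x rec_y init; elim/ltn_ind => k IHk.
have [/init // | le_nk] := ltnP k n.
have := rec_x k le_nk; have := rec_y k le_nk.
rewrite !big_ord_recl !subn0 a0 !mul1r => /eqP; rewrite addr_eq0 => /eqP ->.
move=> /eqP; rewrite addr_eq0 => /eqP ->.
congr (- _); apply: eq_bigr => j _; rewrite IHk //.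
by have := ltn_ord j; rewrite lift0; lia.
Qed.

End LinearRecurrence.

Definition binpow {R : pzSemiRingType} (r : R) (m k : nat) : R :=
  ('C(k, m))%:R * r ^+ (k - m).

Section BinomialPower.
Variable R : comNzRingType.
Implicit Types r : R.

Lemma binpow_rec r m n k : (m < n <= k)%N ->
  \sum_(j < n.+1) (-1) ^+ j * ('C(n, j))%:R * r ^+ j * binpow r m (k - j) = 0.
Proof.
move=> mnk; transitivity (r ^+ (k - m) * bdiffn n (fun i => ('C(i, m))%:R) k).
  2: by rewrite bdiffn_bin_eq0 ?mulr0.
rewrite /bdiffn big_distrr; apply: eq_bigr => j _ /=; rewrite /binpow.
have [le_m_kj | lt_kj_m] := leqP m (k - j).
  rewrite (_ : (k - m = j + (k - j - m))%N); last by have := ltn_ord j; lia.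
  by rewrite exprD; ring.
by rewrite (bin_small lt_kj_m); ring.
Qed.

Lemma binpowS r m k : (m <= k)%N ->
  binpow r m k.+1 * (k.+1 - m)%:R = binpow r m k * k.+1%:R * r.
Proof.
move=> le_mk; have bin_succ : ('C(k.+1, m) * (k.+1 - m))%:R = (k.+1 * 'C(k, m))%:R :> R.
  by rewrite mulnC -mul_bin_down.
rewrite /binpow [in r ^+ _](_ : (k.+1 - m = (k - m).+1)%N); last by lia.
transitivity (r ^+ (k - m) * r * ('C(k.+1, m) * (k.+1 - m))%:R).
  by rewrite exprS natrM; ring.
by rewrite bin_succ natrM; ring.
Qed.

End BinomialPower.

Lemma unimodal_le_peak d (T : porderType d) (f : nat -> T) m p :
  (forall k, (m <= k < p)%N -> (f k <= f k.+1)%O) ->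
  (forall k, (p <= k)%N -> (f k.+1 <= f k)%O) ->
  forall k, (m <= k)%N -> (f k <= f p)%O.
Proof.
move=> up down k le_mk; have [le_kp | lt_pk] := leqP k p.
  suff f_below d' : (d' <= p - m)%N -> (f (p - d')%N <= f p)%O.
    by rewrite -(subKn le_kp) f_below //; lia.
  elim: d' => [|d' IHd] le_dp; first by rewrite subn0.
  apply: le_trans (IHd (ltnW le_dp)); rewrite -[in X in (_ <= X)%O]subnSK; last by lia.
  by apply: up; lia.
suff f_above d' : (f (p + d')%N <= f p)%O by rewrite -(subnKC (ltnW lt_pk)).
elim: d' => [|d' IHd]; first by rewrite addn0.
by apply: le_trans IHd; rewrite addnS down // leq_addr.
Qed.

Lemma rho_succ_mul (R : realFieldType) m : rho R m.+1 * m.+1%:R = m%:R.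
Proof. by rewrite /rho mulrBl mul1r mulVf ?pnatr_eq0 // -natr1 addrK. Qed.

Lemma rho_ge0 (R : realFieldType) m : 0 <= rho R m.+1.
Proof.
have m1_gt0 : 0 < m.+1%:R :> R by rewrite ltr0n.
by rewrite -(pmulr_lge0 _ m1_gt0) rho_succ_mul.
Qed.

Definition peak (m : nat) : nat := (m * m.+1).-1.

Section RhoBinomialPower.
Variables (R : realFieldType) (m : nat).
Hypothesis m_gt0 : (0 < m)%N.
Local Notation y := (binpow (rho R m.+1) m).

Lemma binpow_rho_ge0 k : 0 <= y k.
Proof. by rewrite /binpow mulr_ge0 ?exprn_ge0 ?rho_ge0. Qed.

Lemma binpow_rho_step k : (m <= k)%N ->
  (y k.+1 - y k) * ((k.+1 - m) * m.+1)%:R = y k * ((peak m)%:R - k%:R).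
Proof.
move=> le_mk.
have peak_eq : (k.+1 * m + k = (k.+1 - m) * m.+1 + peak m)%N by rewrite /peak; nia.
have y_succ : y k.+1 * ((k.+1 - m) * m.+1)%:R = y k * (k.+1 * m)%:R.
  by rewrite natrM mulrA binpowS // -!mulrA rho_succ_mul natrM.
have cast_eq : (k.+1 * m)%:R - ((k.+1 - m) * m.+1)%:R = (peak m)%:R - k%:R :> R.
  by apply/eqP; rewrite subr_eq addrAC eq_sym subr_eq addrC -!natrD peak_eq.
by rewrite -cast_eq mulrBl mulrBr y_succ.
Qed.

Lemma binpow_rho_le_peak k : (m <= k)%N -> y k <= y (peak m).
Proof.
have D_gt0 j : (m <= j)%N -> 0 < ((j.+1 - m) * m.+1)%:R :> R.
  by move=> le_mj; rewrite ltr0n muln_gt0; apply/andP; split; lia.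
apply: unimodal_le_peak => j.
  move=> /andP[le_mj lt_jp]; rewrite -subr_ge0 -(pmulr_lge0 _ (D_gt0 j le_mj)).
  by rewrite binpow_rho_step // mulr_ge0 ?binpow_rho_ge0 // subr_ge0 ler_nat ltnW.
move=> le_pj; have le_mj : (m <= j)%N by move: le_pj; rewrite /peak; nia.
rewrite -subr_le0 -(pmulr_lle0 _ (D_gt0 j le_mj)) binpow_rho_step //.
by rewrite mulr_ge0_le0 ?binpow_rho_ge0 // subr_le0 ler_nat.
Qed.

Lemma binpow_rho_peakS : y (peak m).+1 = y (peak m).
Proof.
have le_mp : (m <= peak m)%N by rewrite /peak; nia.
have D_neq0 : (((peak m).+1 - m) * m.+1 != 0)%N by rewrite muln_eq0 negb_or; lia.
apply/eqP; rewrite -subr_eq0.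
have := binpow_rho_step le_mp; rewrite subrr mulr0 => /eqP.
by rewrite mulf_eq0 pnatr_eq0 (negPf D_neq0) orbF.
Qed.

End RhoBinomialPower.

Theorem mainTheorem6 (R : realFieldType) (n : nat) (x : nat -> R) :
  (2 <= n)%N ->
  satisfies_rec n x ->
  initial_cond n x ->
  (forall k : nat, x k = ('C(k, n.-1))%:R * (rho R n) ^+ (k - n.-1)%N)
  /\ (forall k : nat, (n.-1 <= k)%N -> x k <= x (n ^ 2 - n - 1)%N)
  /\ x (n ^ 2 - n)%N = x (n ^ 2 - n - 1)%N
  /\ x (n ^ 2 - n - 1)%N
     = ('C(n ^ 2 - n - 1, n ^ 2 - 2 * n))%:R * (1 - (n%:R)^-1) ^+ (n ^ 2 - 2 * n).
Proof.
case: n => [|m] //; rewrite ltnS => m_gt0 rec [init_zero init_one].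
have x_eq : x =1 binpow (rho R m.+1) m.
  apply: (solves_rec_eq (a := fun j => (-1) ^+ j * ('C(m.+1, j))%:R * rho R m.+1 ^+ j)).
  - by rewrite !expr0 bin0 !mulr1.
  - exact: rec.
  - by move=> k le_mk; apply: binpow_rec; rewrite ltnSn.
  move=> k; rewrite ltnS leq_eqVlt => /orP[/eqP -> | lt_km].
    by rewrite init_one /binpow binn subnn mulr1.
  by rewrite init_zero // /binpow bin_small // mul0r.
have peak_eq : (m.+1 ^ 2 - m.+1 - 1 = peak m)%N by rewrite /peak; nia.
have peakS_eq : (m.+1 ^ 2 - m.+1 = (peak m).+1)%N by rewrite /peak; nia.
have le_mp : (m <= peak m)%N by rewrite /peak; nia.
have exp_eq : (m.+1 ^ 2 - 2 * m.+1 = peak m - m)%N by rewrite /peak; nia.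
rewrite peak_eq peakS_eq exp_eq; split; first exact: x_eq.
split; first by move=> k le_mk; rewrite !x_eq binpow_rho_le_peak.
by rewrite !x_eq binpow_rho_peakS // /binpow bin_sub.
Qed.
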